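(* Let $\ell\ge2$. For $k=1,\dots,n$ let $(\mathcal F_k^{t_k})_{t_k\in\Omega_k}$ be a parametrized family of $C^1$ IFSs, each consisting of $\ell$ maps, on a compact $Z_k\subset\mathbb R^{q_k}$, satisfying the GTC with respect to a locally finite Borel measure $\eta_k$ on the metric space $(\Omega_k,d_{\Omega_k})$. Let $\Omega=\Omega_1\times\cdots\times\Omega_n$ with metric $d_\Omega((t_k)_k,(s_k)_k)=(\sum_kd_{\Omega_k}(t_k,s_k)^2)^{1/2}$, and for $\mathbf t=(t_1,\dots,t_n)\in\Omega$ let $\mathcal F^{\mathbf t}=\mathcal F_1^{t_1}\times\cdots\times\mathcal F_n^{t_n}$. Then the family $(\mathcal F^{\mathbf t})_{\mathbf t\in\Omega}$ satisfies the GTC with respect to $\eta_1\times\cdots\times\eta_n$.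
   Context: Direct product: if $\mathcal F_k=\{f_{i,k}\}_{i=1}^\ell$ is an IFS on $Z_k\subset\mathbb R^{q_k}$, then $\mathcal F_1\times\cdots\times\mathcal F_n=\{f_i\}_{i=1}^\ell$ on $Z_1\times\cdots\times Z_n\subset\mathbb R^{q_1+\dots+q_n}$ with $f_i(x_1,\dots,x_n)=(f_{i,1}(x_1),\dots,f_{i,n}(x_n))$. A $C^1$ IFS on compact $Z\subset\mathbb R^q$: maps $Z\to Z$ extending on an open $U\supset Z$ to $C^1$ diffeomorphisms into $U$ with $\sup_U\|Df_i\|<1$. $\Sigma=\{1,\dots,\ell\}^{\mathbb N}$; $f^t_{\bf i}=f^t_{i_1}\circ\cdots\circ f^t_{i_m}$ for ${\bf i}=i_1\cdots i_m$; coding map $\Pi^t({\bf i})=\lim_mf^t_{{\bf i}|m}(z)$; ${\bf i}\wedge{\bf j}$ the longest common initial word of distinct ${\bf i},{\bf j}$ and $|{\bf i}\wedge{\bf j}|$ its length. Singular value function: for integer $0\le p\le q$, $\phi^p(T)$ is the product of the $p$ largest singular values of $T\in\mathbb R^{q\times q}$. For a family on $Z\subset\mathbb R^q$, $Z^t_{\bf i}(r)=\inf_{x\in\Sigma}\min_{0\le p\le q}r^p/\phi^p(D_{\Pi^tx}f^t_{\bf i})$. GTC w.r.t. a locally finite Borel $\eta$ on a metric parameter space $\Omega$: there exist $\delta_0>0$ and $\psi:(0,\delta_0)\to[0,\infty)$ with $\psi(\delta)\to0$ such that for every $t_0\in\Omega$ and $0<\delta<\delta_0$ there is $C=C(t_0,\delta)>0$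 with $\eta\{t\in B(t_0,\delta):|\Pi^t({\bf i})-\Pi^t({\bf j})|<r\}\le Ce^{|{\bf i}\wedge{\bf j}|\psi(\delta)}Z^{t_0}_{{\bf i}\wedge{\bf j}}(r)$ for all distinct ${\bf i},{\bf j}\in\Sigma$, $r>0$ ($B$ the closed ball). *)

From HB Require Import structures.
From mathcomp Require Import all_boot all_order all_algebra.
From mathcomp Require Import all_classical all_reals.
From mathcomp Require Import ereal topology normedtype sequences derive exp measure.
Set Implicit Arguments. Unset Strict Implicit. Unset Printing Implicit Defensive.
Import Order.TTheory GRing.Theory Num.Theory.
Import numFieldNormedType.Exports.
Local Open Scope classical_set_scope.
Local Open Scope ring_scope.

Section Defs.
Variable R : realType.

Definition enorm (q : nat) (v : 'rV[R]_q) : R :=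
  Num.sqrt (\sum_(i < q) (v ord0 i) ^+ 2).

Definition opnorm (q : nat) (A : 'M[R]_q) : R :=
  sup [set enorm (v *m A) | v in [set v : 'rV[R]_q | enorm v <= 1]].

(* singular values of A: the decreasingly sorted nonnegative reals s_1>=..>=s_q
   whose squares are the eigenvalues (with multiplicity) of A^T A *)
Definition singular_values (q : nat) (A : 'M[R]_q) (s : seq R) : Prop :=
  [/\ size s = q, sorted (fun x y => y <= x) s, all (fun x => 0 <= x) s &
      char_poly (A^T *m A) = \prod_(x <- s) ('X - (x ^+ 2)%:P)].

Definition svf (q : nat) (p : nat) (A : 'M[R]_q) : R :=
  \prod_(i < p) (xget [::] (singular_values A)) `_ i.

Definition C1_on (q : nat) (U : set 'rV[R]_q) (f : 'rV[R]_q -> 'rV[R]_q) : Prop :=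
  forall x, U x -> differentiable f x /\ {for x, continuous (jacobian f)}.

Definition C1_diffeo_into (q : nat) (U : set 'rV[R]_q) (f : 'rV[R]_q -> 'rV[R]_q) :=
  [/\ C1_on U f, f @` U `<=` U, open (f @` U) &
      exists g, [/\ C1_on (f @` U) g, (forall x, U x -> g (f x) = x) &
                    (forall y, (f @` U) y -> f (g y) = y)]].

(* symbolic space Sigma = {1..l}^N, finite words are seq 'I_l *)
Definition prefix (l : nat) (i : nat -> 'I_l) (m : nat) : seq 'I_l := mkseq i m.

Definition wmap (l q : nat) (F : 'I_l -> 'rV[R]_q -> 'rV[R]_q) (w : seq 'I_l) :
  'rV[R]_q -> 'rV[R]_q := foldr (fun a g => F a \o g) id w.

(* a C^1 IFS {F i}_(i < l) on the compact set Z (nonempty); the last clause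
   says that the coding map  lim_m f_{i|m}(z)  is well defined, i.e. the limit
   exists and does not depend on z in Z *)
Definition C1_IFS (l q : nat) (Z : set 'rV[R]_q) (F : 'I_l -> 'rV[R]_q -> 'rV[R]_q) :=
  [/\ compact Z, Z !=set0, (forall i, F i @` Z `<=` Z),
      (exists U : set 'rV[R]_q, [/\ open U, Z `<=` U &
         forall i, C1_diffeo_into U (F i) /\
           exists c, c < 1 /\ forall x, U x -> opnorm (jacobian (F i) x) <= c]) &
      (forall i : nat -> 'I_l, exists p : 'rV[R]_q, forall z, Z z ->
          (fun m => wmap F (prefix i m) z) @ \oo --> p)].

Definition coding (l q : nat) (Z : set 'rV[R]_q) (F : 'I_l -> 'rV[R]_q -> 'rV[R]_q)
  (i : nat -> 'I_l) : 'rV[R]_q :=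
  lim ((fun m => wmap F (prefix i m) (xget 0 Z)) @ \oo).

Definition wedge_len (l : nat) (i j : nat -> 'I_l) : nat :=
  xget 0%N [set m | i m <> j m /\ forall k, (k < m)%N -> i k = j k].

Definition wedge (l : nat) (i j : nat -> 'I_l) : seq 'I_l := prefix i (wedge_len i j).

Definition Zsv (l q : nat) (Z : set 'rV[R]_q) (F : 'I_l -> 'rV[R]_q -> 'rV[R]_q)
  (w : seq 'I_l) (r : R) : R :=
  inf [set \big[Num.min/1]_(p < q.+1)
            (r ^+ p / svf p (jacobian (wmap F w) (coding Z F x)))
      | x in [set: nat -> 'I_l]].

Definition is_metric (T : Type) (d : T -> T -> R) : Prop :=
  [/\ forall x y, 0 <= d x y, forall x y, d x y = 0 <-> x = y,
      forall x y, d x y = d y x & forall x y z, d x z <= d x y + d y z].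

Definition dopen (T : Type) (d : T -> T -> R) (A : set T) : Prop :=
  forall x, A x -> exists e, 0 < e /\ [set y | d x y < e] `<=` A.

Definition borel (T : Type) (d : T -> T -> R) : set (set T) :=
  <<s [set A | dopen d A] >>.

Definition measure_on (T : Type) (M : set (set T)) (mu : set T -> \bar R) : Prop :=
  [/\ mu set0 = 0%E, (forall A, M A -> (0 <= mu A)%E) &
      forall F : nat -> set T, (forall k, M (F k)) -> trivIset setT F ->
        (fun m => (\sum_(0 <= k < m) mu (F k))%E) @ \oo --> mu (\bigcup_k F k)].

Definition loc_finite_borel (T : Type) (d : T -> T -> R) (mu : set T -> \bar R) :=
  measure_on (borel d) mu /\
  forall t, exists e : R, 0 < e /\ (mu [set y | (d t y < e)%R] < +oo)%E.

(* outer measure induced by mu on M (used to evaluate mu on arbitrary sets) *)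
Definition outer (T : Type) (M : set (set T)) (mu : set T -> \bar R) (A : set T) : \bar R :=
  ereal_inf [set mu B | B in [set B | M B /\ A `<=` B]].

Definition GTC (l q : nat) (T : Type) (d : T -> T -> R) (M : set (set T))
  (eta : set T -> \bar R) (Z : set 'rV[R]_q) (F : T -> 'I_l -> 'rV[R]_q -> 'rV[R]_q) :=
  exists delta0, 0 < delta0 /\ exists psi : R -> R,
    [/\ (forall x, 0 < x < delta0 -> 0 <= psi x),
        psi x @[x --> 0^'+] --> 0 &
        forall (t0 : T) (delta : R), 0 < delta < delta0 ->
          exists C : R, 0 < C /\
            forall i j : nat -> 'I_l, i <> j -> forall r : R, 0 < r ->
              (outer M eta [set t | (d t0 t <= delta)%R /\
                   (enorm (coding Z (F t) i - coding Z (F t) j) < r)%R]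
               <= (C * expR ((wedge_len i j)%:R * psi delta)
                     * Zsv Z (F t0) (wedge i j) r)%:E)%E].

Section Products.
Variables (n : nat) (Om : 'I_n -> Type).

Definition prod_dist (d : forall k, Om k -> Om k -> R) (t s : forall k, Om k) : R :=
  Num.sqrt (\sum_(k < n) (d k (t k) (s k)) ^+ 2).

Definition box (A : forall k, set (Om k)) : set (forall k, Om k) :=
  [set t | forall k, A k (t k)].

Definition prod_sigma (d : forall k, Om k -> Om k -> R) : set (set (forall k, Om k)) :=
  <<s [set box A | A in [set A : forall k, set (Om k) | forall k, borel (d k) (A k)]] >>.

Definition is_product_measure (d : forall k, Om k -> Om k -> R)
  (etas : forall k, set (Om k) -> \bar R) (eta : set (forall k, Om k) -> \bar R) :=
  measure_on (prod_sigma d) eta /\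
  forall A : forall k, set (Om k), (forall k, borel (d k) (A k)) ->
    eta (box A) = (\prod_(k < n) etas k (A k))%E.
End Products.

Section ProductIFS.
Variables (n : nat) (q : 'I_n -> nat).

Definition prodZ (Z : forall k, set 'rV[R]_(q k)) : set 'rV[R]_(\sum_(k < n) q k) :=
  [set x | forall k, Z k (submxrow x k)].

Definition prod_map (f : forall k, 'rV[R]_(q k) -> 'rV[R]_(q k))
  (x : 'rV[R]_(\sum_(k < n) q k)) : 'rV[R]_(\sum_(k < n) q k) :=
  \mxrow_(k < n) f k (submxrow x k).
End ProductIFS.

End Defs.

From Pilot Require Import Defs.
From HB Require Import structures.
From mathcomp Require Import all_boot all_order all_algebra.
From mathcomp Require Import all_classical all_reals.
From mathcomp Require Import ereal topology normedtype sequences derive exp measure.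
From mathcomp Require Import lra.
Set Implicit Arguments. Unset Strict Implicit. Unset Printing Implicit Defensive.
Import Order.TTheory GRing.Theory Num.Theory.
Import numFieldNormedType.Exports.
Local Open Scope classical_set_scope.
Local Open Scope ring_scope.

(* Every quantity in the GTC inequality factorizes over the coordinates k:
   - the coding map of the product IFS is the concatenation of the factor
     codings, so the Euclidean distance |Pi^t i - Pi^t j| dominates each
     factor distance, and the product metric dominates each factor metric;
     hence the product event {t | d(t0,t) <= delta, |Pi^t i - Pi^t j| < r}
     lies in the box of the factor events;
   - the Jacobian of the product map f_w is block-diagonal, its singular
     values are those of the blocks merged, and
     min_p r^p / phi^p(A) = prod_(s sing. value of A) min(1, r/s),
     so Z_w(r) of the product dominates the product of the factors' Z_w(r);
   - under a product measure the outer measure of a box is at most the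
     product of bounds on the outer measures of its sides.
   The product then satisfies the GTC with delta0 = min_k delta0_k,
   psi = sum_k psi_k and C = prod_k C_k. *)

Section BlockDiagonal.

Lemma char_poly_castmx (R : comNzRingType) m m' (e : m = m') (A : 'M[R]_m) :
  char_poly (castmx (e, e) A) = char_poly A.
Proof. by case: m' / e; rewrite castmx_id. Qed.

Lemma char_poly_mx0 (R : comNzRingType) m (A : 'M[R]_m) : m = 0%N -> char_poly A = 1.
Proof. by move=> m0; subst m; rewrite /char_poly det_mx00. Qed.

Lemma char_poly_block (R : comNzRingType) m1 m2 (A : 'M[R]_m1) (B : 'M[R]_m2) :
  char_poly (block_mx A 0 0 B) = char_poly A * char_poly B.
Proof.
rewrite /char_poly /char_poly_mx map_block_mx map_mx0 (scalar_mx_block m1 m2).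
by rewrite opp_block_mx add_block_mx map_mx0 !subr0 det_ublock.
Qed.

Lemma char_poly_mxdiag (R : comNzRingType) p (p_ : 'I_p -> nat)
    (B : forall i, 'M[R]_(p_ i)) :
  char_poly (\mxdiag_i B i) = \prod_i char_poly (B i).
Proof.
elim: p p_ B => [|p IH] p_ B; first by rewrite [RHS]big_ord0 char_poly_mx0 // big_ord0.
by rewrite mxdiag_recl char_poly_castmx char_poly_block IH big_ord_recl.
Qed.

Lemma mul_mxdiag (R : pzSemiRingType) p (p_ : 'I_p -> nat)
    (A B : forall i, 'M[R]_(p_ i)) :
  \mxdiag_i A i *m \mxdiag_i B i = \mxdiag_i (A i *m B i).
Proof.
rewrite {2}/mxdiag mul_mxdiag_mxblock /mxdiag; apply/eq_mxblock => i j.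
by case: eqVneq => [->|]; rewrite ?mulmx0 // !conform_mx_id.
Qed.

End BlockDiagonal.

Section SingularValues.
Variable R : realType.
Local Notation ge := (fun x y : R => y <= x).

Let ge_trans : transitive ge.
Proof. by move=> x y z /= h1 h2; exact: le_trans h2 h1. Qed.

(* Singular values are determined by the matrix: both sequences are the
   decreasing square roots of the roots of char_poly (A^T A). *)
Lemma singular_values_unique q (A : 'M[R]_q) s t :
  singular_values A s -> singular_values A t -> s = t.
Proof.
case=> _ ss /allP s0 cs [_ st /allP t0 ct].
have ge_anti : antisymmetric ge by move=> x y /andP[h1 h2]; apply/le_anti/andP.
apply: (sorted_eq ge_trans ge_anti) => //.
have : perm_eq (map (fun x => x ^+ 2) s) (map (fun x => x ^+ 2) t).
  by apply: prod_XsubC_eq; rewrite !big_map -cs -ct.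
move/(perm_map Num.sqrt); rewrite -!map_comp.
have sqrtK u : {in u, forall x : R, 0 <= x} ->
    map (Num.sqrt \o (fun x => x ^+ 2)) u = u.
  move=> u0; rewrite -[RHS]map_id; apply/eq_in_map => x /u0 x0 /=.
  by rewrite sqrtr_sqr ger0_norm.
by rewrite !sqrtK.
Qed.

(* The singular values of a block-diagonal matrix are those of its blocks,
   merged in decreasing order. *)
Definition sv_merge p (s : 'I_p -> seq R) : seq R :=
  sort ge (flatten [seq s k | k <- enum 'I_p]).

Lemma perm_sv_merge p (s : 'I_p -> seq R) :
  perm_eq (sv_merge s) (flatten [seq s k | k <- enum 'I_p]).
Proof. by rewrite perm_sort. Qed.

Lemma singular_values_mxdiag p (p_ : 'I_p -> nat) (A : forall i, 'M[R]_(p_ i)) s :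
  (forall k, singular_values (A k) (s k)) ->
  singular_values (\mxdiag_i A i) (sv_merge s).
Proof.
move=> hs; split.
- rewrite size_sort size_flatten /shape -map_comp sumnE big_map big_enum /=.
  by apply: eq_bigr => k _; have [] := hs k.
- by apply: sort_sorted => x y; exact: le_total.
- rewrite (perm_all _ (perm_sv_merge s)).
  apply/allP => x /flattenP [u /mapP[k _ ->]].
  by have [_ _ /allP h _] := hs k; exact: h.
- rewrite tr_mxdiag mul_mxdiag char_poly_mxdiag (perm_big _ (perm_sv_merge s)) /=.
  rewrite big_flatten big_map big_enum /=; apply: eq_bigr => k _.
  by have [] := hs k.
Qed.

(* For nonnegative singular values s_1 >= ... >= s_q, the quantity
   min_p r^p / (s_1 ... s_p) equals prod_i min(1, r / s_i): the minimum is
   reached by taking exactly the factors with s_i > r. *)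
Definition ratio (r : R) (s : seq R) (p : nat) : R := r ^+ p / \prod_(i < p) s`_i.
Definition clipped_prod (r : R) (s : seq R) : R := \prod_(x <- s) Num.min 1 (r / x).

Lemma ratioE r s p : ratio r s p = \prod_(0 <= i < p) (r / s`_i).
Proof. by rewrite /ratio big_split /= prodfV prodr_const_nat subn0 big_mkord. Qed.

Lemma clipped_prodE r s :
  clipped_prod r s = \prod_(0 <= i < size s) Num.min 1 (r / s`_i).
Proof. by rewrite /clipped_prod (big_nth 0). Qed.

Lemma clip_factor_bound (r x : R) : 0 <= r -> 0 <= x -> 0 <= Num.min 1 (r / x) <= 1.
Proof. by move=> r0 x0; rewrite le_min ler01 divr_ge0 //= ge_min lexx. Qed.

Lemma nth_ge0 (s : seq R) i : all (fun x => 0 <= x) s -> 0 <= s`_i.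
Proof.
move=> /allP s0; case: (ltnP i (size s)) => h; first by apply: s0; exact: mem_nth.
by rewrite nth_default.
Qed.

Lemma clipped_prod_ge0 r s : 0 <= r -> all (fun x => 0 <= x) s -> 0 <= clipped_prod r s.
Proof.
move=> r0 /allP s0; rewrite /clipped_prod big_seq; apply: prodr_ge0 => x /s0 x0.
by have /andP[] := clip_factor_bound r0 x0.
Qed.

(* Each ratio dominates the clipped product (every clipped factor is <= 1
   and <= r / s_i). *)
Lemma clipped_prod_le_ratio r s p : 0 <= r -> all (fun x => 0 <= x) s ->
  (p <= size s)%N -> clipped_prod r s <= ratio r s p.
Proof.
move=> r0 s0 ps; rewrite clipped_prodE ratioE (big_cat_nat (leq0n p) ps) /=.
have hm i : 0 <= Num.min 1 (r / s`_i) <= 1.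
  by apply: clip_factor_bound => //; exact: nth_ge0.
rewrite -[X in _ <= X]mulr1; apply: ler_pM.
- by apply: prodr_ge0 => i _; have /andP[] := hm i.
- by apply: prodr_ge0 => i _; have /andP[] := hm i.
- by apply: ler_prod => i _; have /andP[-> _] := hm i; rewrite ge_min lexx orbT.
- exact: prodr_ile1.
Qed.

(* Conversely the ratio at p0 = #{i | s_i > r} equals the clipped product
   (or some s_i vanishes and the ratio at q is 0). *)
Lemma ratio_min_le_clipped_prod r s : 0 < r -> sorted ge s ->
  all (fun x => 0 <= x) s ->
  \big[Num.min/1]_(p < (size s).+1) ratio r s p <= clipped_prod r s.
Proof.
move=> r0 ss s0; case: (boolP (0 \in s)) => [zs | zs].
  have zi : (index (0 : R)%R s < size s)%N by rewrite index_mem.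
  apply: (le_trans (bigmin_le _ ord_max _)); rewrite /ratio (bigD1 (Ordinal zi)) //=.
  by rewrite nth_index // mul0r invr0 mulr0 clipped_prod_ge0 ?ltW.
set p0 := find (fun x => x <= r) s.
have p0s : (p0 <= size s)%N by exact: find_size.
apply: (le_trans (bigmin_le _ (Ordinal (p0s : p0 < (size s).+1)%N) _)) => /=.
have s_gt0 i : (i < size s)%N -> 0 < s`_i.
  move=> h; rewrite lt_def (allP s0) ?mem_nth // andbT.
  by apply: contraNneq zs => <-; exact: mem_nth.
rewrite clipped_prodE ratioE (big_cat_nat (leq0n p0) p0s) /=.
have small : \prod_(p0 <= i < size s) Num.min 1 (r / s`_i) = 1.
  rewrite big_nat_cond big1 // => i /andP[/andP[pi iz] _].
  have hs : has (fun x => x <= r) s by rewrite has_find (leq_ltn_trans pi).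
  have le_p0 : s`_i <= s`_p0.
    apply: (sorted_leq_nth ge_trans (fun x => lexx x) 0 ss) => //.
    by rewrite inE (leq_ltn_trans pi).
  apply: min_l; rewrite ler_pdivlMr ?s_gt0 // mul1r.
  exact: le_trans le_p0 (nth_find 0 hs).
rewrite small mulr1 le_eqVlt; apply/orP; left.
apply/eqP/eq_big_nat => i /andP[_ ip]; apply/esym/min_r.
have := before_find 0 ip; rewrite -/p0 => /negbT; rewrite -ltNge => ri.
by rewrite ler_pdivrMr ?s_gt0 ?(leq_trans ip) // mul1r ltW.
Qed.

Definition sv_scale (r : R) m (A : 'M[R]_m) : R :=
  \big[Num.min/1]_(p < m.+1) (r ^+ p / svf p A).

Local Notation sv A := (xget [::] (singular_values A)).

Lemma sv_scaleE r m (A : 'M[R]_m) :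
  sv_scale r A = \big[Num.min/1]_(p < m.+1) ratio r (sv A) p.
Proof. by []. Qed.

Lemma sv_ge0 m (A : 'M[R]_m) : all (fun x => 0 <= x) (sv A).
Proof. by case: xgetP => // s _ [_ _ ->]. Qed.

Lemma sv_scale_ge0 r m (A : 'M[R]_m) : 0 <= r -> 0 <= sv_scale r A.
Proof.
move=> r0; rewrite sv_scaleE; apply: le_bigmin => // p _.
rewrite /ratio divr_ge0 ?exprn_ge0 //.
by apply: prodr_ge0 => i _; exact: nth_ge0 (sv_ge0 A).
Qed.

Lemma sv_scale_clipped r m (A : 'M[R]_m) s : 0 < r -> singular_values A s ->
  sv_scale r A = clipped_prod r s.
Proof.
move=> r0 hs; have [sz ss s0 _] := hs.
have svA : sv A = s by apply: (singular_values_unique _ hs); apply: xgetPex; exists s.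
rewrite sv_scaleE svA.
apply/le_anti/andP; split.
  by rewrite -sz; exact: ratio_min_le_clipped_prod.
apply: le_bigmin; last by move=> p _; rewrite clipped_prod_le_ratio ?(ltW r0) // sz -ltnS.
rewrite /clipped_prod big_seq; apply: prodr_ile1 => x xs.
by apply: clip_factor_bound (ltW r0) _; exact: (allP s0).
Qed.

(* Without singular values every phi^p with p >= 1 is the empty-list product
   of zeros, so the scale vanishes (m = 0 always has singular values). *)
Lemma sv_scale_none r m (A : 'M[R]_m) : 0 < r ->
  ~ (exists s, singular_values A s) -> sv_scale r A = 0.
Proof.
move=> r0 hn; have svA : sv A = [::] by apply: xgetPN => s hs; apply: hn; exists s.
case: m A hn svA => [|m] A hn svA.
  by exfalso; apply: hn; exists [::]; split; rewrite // big_nil char_poly_mx0.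
apply/le_anti/andP; split; last exact: sv_scale_ge0 (ltW r0).
rewrite sv_scaleE svA; apply: (le_trans (bigmin_le _ (Ordinal (isT : 1 < m.+2)%N) _)).
by rewrite /ratio /= big_ord1 nth_nil invr0 mulr0.
Qed.

Lemma clipped_prod_merge r p (s : 'I_p -> seq R) :
  clipped_prod r (sv_merge s) = \prod_k clipped_prod r (s k).
Proof. by rewrite /clipped_prod (perm_big _ (perm_sv_merge s)) big_flatten big_map big_enum. Qed.

Lemma sv_scale_mxdiag p (p_ : 'I_p -> nat) (A : forall i, 'M[R]_(p_ i)) r :
  0 < r -> \prod_i sv_scale r (A i) <= sv_scale r (\mxdiag_i A i).
Proof.
move=> r0; case: (pselect (forall k, exists s, singular_values (A k) s)) => [h|h].
  have [s hs] := boolp.choice h.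
  rewrite (sv_scale_clipped r0 (singular_values_mxdiag hs)) clipped_prod_merge.
  apply: ler_prod => k _.
  by rewrite sv_scale_ge0 ?(ltW r0) //= (sv_scale_clipped r0 (hs k)).
have [k hk] : exists k, ~ exists s, singular_values (A k) s.
  by apply: contra_notP h => hn k; apply: contra_notP hn => hk; exists k.
by rewrite (bigD1 k) //= sv_scale_none // mul0r sv_scale_ge0 ?ltW.
Qed.

End SingularValues.

Section MatrixContinuity.
Variable R : realType.

Lemma continuous_mx_entries (T : topologicalType) m n (f : T -> 'M[R]_(m, n)) x :
  (forall i j, {for x, continuous (fun y => f y i j)}) -> {for x, continuous f}.
Proof.
move=> h A /= /nbhs_ballP [e e0 eA].
have near_x : \forall y \near x, forall i j, `|f x i j - f y i j| < e.
  apply: filter_forall => i; apply: filter_forall => j.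
  by have /cvgrPdist_lt := h i j; apply.
by apply: filterS near_x => y hy; apply: eA; split => // i j; exact: hy.
Qed.

Lemma mulmxr_continuous m a b (A : 'M[R]_(a, b)) :
  continuous (fun x : 'M[R]_(m, a) => x *m A).
Proof.
move=> x; apply: continuous_mx_entries => i j.
under [X in {for _, continuous X}]eq_fun do rewrite mxE.
apply: (@continuous_big _ _ +%R 0 xpredT) => //; first exact: add_continuous.
move=> k _ y.
exact: continuous_comp (@coord_continuous R _ _ i k y) (@mulrr_continuous R (A k j) _).
Qed.

Lemma mulmxr_differential a b (B : 'M[R]_(a, b)) (x : 'rV[R]_a) :
  differentiable (mulmxr B) x /\ 'd (mulmxr B) x = mulmxr B :> ('rV[R]_a -> 'rV[R]_b).
Proof.
split; first by apply: linear_differentiable; exact: mulmxr_continuous.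
by apply: diff_lin; exact: mulmxr_continuous.
Qed.

End MatrixContinuity.

Section ProductMaps.
Variables (R : realType) (n : nat) (q : 'I_n -> nat).
Local Notation Q := (\sum_(k < n) q k)%N.

Definition proj_mx k : 'M[R]_(Q, q k) := submxrow (1%:M : 'M[R]_Q) k.
Definition incl_mx k : 'M[R]_(q k, Q) := submxcol (1%:M : 'M[R]_Q) k.

Lemma submxrowE (x : 'rV[R]_Q) k : submxrow x k = x *m proj_mx k.
Proof. by rewrite /proj_mx mul_submxrow mulmx1. Qed.

Lemma mxrowE (y : forall k, 'rV[R]_(q k)) : \mxrow_k y k = \sum_k y k *m incl_mx k.
Proof.
by rewrite -[LHS]mulmx1 -[X in _ *m X](submxcolK (1%:M : 'M[R]_Q)) mul_mxrow_mxcol.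
Qed.

Lemma jacobian_prod_map (g : forall k, 'rV[R]_(q k) -> 'rV[R]_(q k)) (x : 'rV[R]_Q) :
  (forall k, differentiable (g k) (submxrow x k)) ->
  differentiable (prod_map g) x /\
  jacobian (prod_map g) x = \mxdiag_k jacobian (g k) (submxrow x k).
Proof.
move=> dg.
pose h k := mulmxr (incl_mx k) \o (g k \o mulmxr (proj_mx k)).
have hE : prod_map g = \sum_k h k.
  apply/funext => y; rewrite fct_sumE /prod_map mxrowE; apply: eq_bigr => k _.
  by rewrite /h /= submxrowE.
have dgk k : differentiable (g k) (mulmxr (proj_mx k) x) by rewrite /= -submxrowE.
have dh k : differentiable (h k) x.
  have [dP _] := mulmxr_differential (proj_mx k) x.
  have [dI _] := mulmxr_differential (incl_mx k) (g k (x *m proj_mx k)).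
  by apply: differentiable_comp => //; apply: differentiable_comp.
have dprod : differentiable (prod_map g) x by rewrite hE; exact: differentiable_sum.
split => //; apply/row_matrixP => i; rewrite !rowE.
rewrite -deriveEjacobian // hE derive_sum; last by move=> k; exact: diff_derivable.
rewrite -{2}(submxrowK 'e_i) mul_mxrow_mxdiag mxrowE; apply: eq_bigr => k _.
have [dP eP] := mulmxr_differential (proj_mx k) x.
have [dI eI] := mulmxr_differential (incl_mx k) (g k (x *m proj_mx k)).
rewrite deriveE // /h diff_comp //; last exact: differentiable_comp.
by rewrite diff_comp // /= eP eI /= -submxrowE -mul_rV_lin1 -submxrowE.
Qed.

Lemma wmap_prod l (G : forall k, 'I_l -> 'rV[R]_(q k) -> 'rV[R]_(q k)) w :
  wmap (fun i => prod_map (fun k => G k i)) w = prod_map (fun k => wmap (G k) w).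
Proof.
elim: w => [|a w IH] /=; apply/funext => y; first by rewrite /prod_map submxrowK.
by rewrite IH /prod_map /=; apply/eq_mxrow => k; rewrite mxrowK.
Qed.

End ProductMaps.

Section CodingMap.
Variables (R : realType) (l q : nat) (Z : set 'rV[R]_q) (G : 'I_l -> 'rV[R]_q -> 'rV[R]_q).
Hypothesis hG : C1_IFS Z G.

Lemma wmap_in w z : Z z -> Z (wmap G w z).
Proof.
have [_ _ GZ _ _] := hG.
elim: w => [|a w IH] //= Zz; apply: (GZ a).
by exists (wmap G w z) => //; exact: IH.
Qed.

Lemma wmap_differentiable w z : Z z -> differentiable (wmap G w) z.
Proof.
have [_ _ _ [U [_ ZU hU]] _] := hG.
elim: w => [|a w IH] /= Zz; first exact: ex_diff.
apply: differentiable_comp; first exact: IH.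
by have [[C1 _ _ _] _] := hU a; have [] := C1 _ (ZU _ (wmap_in w Zz)).
Qed.

Lemma coding_cvg i z : Z z ->
  (fun m => wmap G (Defs.prefix i m) z) @ \oo --> coding Z G i.
Proof.
have [_ Z0 _ _ hc] := hG; have [p hp] := hc i.
have Zx : Z (xget 0 Z) by apply: xgetPex.
suff -> : coding Z G i = p by move=> Zz; exact: hp.
by apply: cvg_lim; [exact: norm_hausdorff | exact: hp].
Qed.

Lemma coding_in i : Z (coding Z G i).
Proof.
have [cZ Z0 _ _ _] := hG.
have Zx : Z (xget 0 Z) by apply: xgetPex.
apply: (closed_cvg Z _ _ _ (@coding_cvg i _ Zx)).
  exact: compact_closed (@norm_hausdorff _ _) cZ.
by apply: nearW => m; exact: wmap_in.
Qed.

End CodingMap.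

Section ZsvBounds.
Variables (R : realType) (l m : nat) (Y : set 'rV[R]_m) (H : 'I_l -> 'rV[R]_m -> 'rV[R]_m).

Lemma Zsv_ge0 w r : (0 < l)%N -> 0 < r -> 0 <= Zsv Y H w r.
Proof.
move=> l0 r0; apply: lb_le_inf.
  by eexists; exists (fun=> Ordinal l0).
by move=> _ [x _ <-]; exact: (sv_scale_ge0 _ (ltW r0)).
Qed.

Lemma Zsv_le w r x : 0 < r ->
  Zsv Y H w r <= sv_scale r (jacobian (wmap H w) (coding Y H x)).
Proof.
move=> r0; apply: ge_inf; last by exists x.
by exists 0 => _ [y _ <-]; exact: (sv_scale_ge0 _ (ltW r0)).
Qed.

End ZsvBounds.

Section ProductIFS.
Local Unset Implicit Arguments.
Variables (R : realType) (l n : nat) (q : 'I_n -> nat).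
Variables (Z : forall k, set 'rV[R]_(q k)) (G : forall k, 'I_l -> 'rV[R]_(q k) -> 'rV[R]_(q k)).
Hypothesis hG : forall k : 'I_n, C1_IFS (Z k) (G k).
Local Notation Gp := (fun i => prod_map (fun k => G k i)).

Lemma prodZ_point : prodZ Z (xget 0 (prodZ Z)).
Proof.
apply: xgetPex; exists (\mxrow_k xget 0 (Z k)); rewrite /prodZ /= => k; rewrite mxrowK.
by have [_ Z0 _ _ _] := hG k; apply: xgetPex.
Qed.

Lemma coding_prod i : coding (prodZ Z) Gp i = \mxrow_k coding (Z k) (G k) i.
Proof.
rewrite {1}/coding; apply: cvg_lim; first exact: norm_hausdorff.
set z0 := xget 0 (prodZ Z).
have -> : (fun m => wmap Gp (Defs.prefix i m) z0) =
    (fun m => \sum_k wmap (G k) (Defs.prefix i m) (submxrow z0 k) *m @incl_mx R n q k).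
  by apply/funext => m; rewrite wmap_prod /prod_map mxrowE.
rewrite mxrowE; apply: (@cvg_big _ _ +%R 0 xpredT add_continuous) => // k _.
have factor_cvg := @coding_cvg R l (q k) (Z k) (G k) (hG k) i _ (prodZ_point k).
exact: (continuous_cvg _ (@mulmxr_continuous R 1 _ _ (@incl_mx R n q k) _) factor_cvg).
Qed.

(* Along a coding, the product Jacobian is block-diagonal, so its scale
   dominates the product of the factor scales. *)
Lemma sv_scale_prod w r x : 0 < r ->
  \prod_k sv_scale r (jacobian (wmap (G k) w) (coding (Z k) (G k) x))
  <= sv_scale r (jacobian (wmap Gp w) (coding (prodZ Z) Gp x)).
Proof.
move=> r0; rewrite wmap_prod coding_prod.
have dw k : differentiable (wmap (G k) w) (submxrow (\mxrow_k coding (Z k) (G k) x) k).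
  by rewrite mxrowK; apply: wmap_differentiable => //; apply: coding_in.
have [_ ->] := jacobian_prod_map dw.
by under eq_mxdiag do rewrite mxrowK; exact: sv_scale_mxdiag.
Qed.

Lemma Zsv_prod w r : (0 < l)%N -> 0 < r ->
  \prod_k Zsv (Z k) (G k) w r <= Zsv (prodZ Z) Gp w r.
Proof.
move=> l0 r0; apply: lb_le_inf; first by eexists; exists (fun=> Ordinal l0).
move=> _ [x _ <-]; apply: le_trans (sv_scale_prod w r x r0).
by apply: ler_prod => k _; rewrite Zsv_ge0 //=; exact: Zsv_le.
Qed.

End ProductIFS.

Lemma prod_perturb_le (R : realFieldType) n (b : 'I_n -> R) e :
  (forall k, 0 <= b k) -> 0 <= e <= 1 ->
  \prod_k (b k + e) <= \prod_k b k + e * \prod_k (b k + 2).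
Proof.
elim: n b => [|n IH] b b0 /andP[e0 e1]; first by rewrite !big_ord0 mulr1 lerDl.
rewrite !big_ord_recl.
set P := \prod_(i < n) b (lift ord0 i); set M := \prod_(i < n) (b (lift ord0 i) + 2).
set P' := \prod_(i < n) (b (lift ord0 i) + e).
have hP' : P' <= P + e * M by apply: IH => [k|]; [exact: b0 | rewrite e0 e1].
have P0 : 0 <= P by apply: prodr_ge0 => k _; exact: b0.
have PM : P <= M by apply: ler_prod => k _; rewrite b0 /= lerDl.
have P'0 : 0 <= P' by apply: prodr_ge0 => k _; rewrite addr_ge0 // b0.
have c0 := b0 ord0; set c := b ord0 in c0 *.
apply: le_trans (_ : (c + e) * (P + e * M) <= _); first by rewrite ler_wpM2l // addr_ge0.
have eeM : e * (e * M) <= e * M by rewrite ler_wpM2l // ler_piMl // (le_trans P0).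
have eP : e * P <= e * M by rewrite ler_wpM2l.
nra.
Qed.

Lemma outer_le (R : realType) (T : Type) (M : set (set T)) (mu : set T -> \bar R)
    (A B : set T) :
  A `<=` B -> (outer M mu A <= outer M mu B)%E.
Proof.
move=> AB; apply: ereal_inf_le_tmp => _ [X [MX BX] <-].
by exists X => //; split => //; exact: subset_trans BX.
Qed.

Section OuterProduct.
Local Unset Implicit Arguments.
Variables (R : realType) (n : nat) (Om : 'I_n -> Type).
Variables (d : forall k, Om k -> Om k -> R) (eta : forall k, set (Om k) -> \bar R).
Variable (etaP : set (forall k, Om k) -> \bar R).
Hypothesis hP : is_product_measure d eta etaP.
Hypothesis heta : forall k, measure_on (borel (d k)) (eta k).

(* Cover each side S_k by a Borel set of measure < b_k + e; their box is
   measurable and covers the box of the S_k. *)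
Lemma outer_box_le_perturbed (S : forall k, set (Om k)) (b : 'I_n -> R) e :
  0 < e -> (forall k, (outer (borel (d k)) (eta k) (S k) <= (b k)%:E)%E) ->
  (outer (prod_sigma d) etaP (box S) <= (\prod_k (b k + e))%:E)%E.
Proof.
move=> e0 hS.
have cover k : exists B : set (Om k),
    [/\ borel (d k) B, S k `<=` B & (eta k B < (b k + e)%:E)%E].
  have : (outer (borel (d k)) (eta k) (S k) < (b k + e)%:E)%E.
    by apply: le_lt_trans (hS k) _; rewrite lte_fin ltrDl.
  by move/ereal_inf_lt => [_ [B [mB sB] <-] lt]; exists B.
pose B k := sval (cid (cover k)).
have hB k : [/\ borel (d k) (B k), S k `<=` B k & (eta k (B k) < (b k + e)%:E)%E].
  exact: svalP (cid (cover k)).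
have B0 k : (0 <= eta k (B k))%E by have [_ ge0 _] := heta k; apply: ge0; case: (hB k).
apply: (@le_trans _ _ (etaP (box B))).
  apply: ereal_inf_lbound; exists (box B) => //; split.
    by apply: sub_gen_smallest; exists B => // k; case: (hB k).
  by move=> t St k; case: (hB k) => _ sB _; exact: sB _ (St k).
have [_ ->] := hP; last by move=> k; case: (hB k).
have fin k : eta k (B k) = (fine (eta k (B k)))%:E.
  by have [_ _ lt] := hB k; rewrite fineK // ge0_fin_numE // (lt_le_trans lt) ?leey.
rewrite (eq_bigr _ (fun k _ => fin k)) prodEFin lee_fin; apply: ler_prod => k _.
rewrite fine_ge0 //=; by case: (hB k) => _ _; rewrite {1}fin lte_fin => /ltW.
Qed.

(* Letting e -> 0 in outer_box_le_perturbed, via prod_perturb_le. *)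
Lemma outer_box_le (S : forall k, set (Om k)) (b : 'I_n -> R) :
  (forall k, 0 <= b k) ->
  (forall k, (outer (borel (d k)) (eta k) (S k) <= (b k)%:E)%E) ->
  (outer (prod_sigma d) etaP (box S) <= (\prod_k b k)%:E)%E.
Proof.
move=> b0 hS; set M := \prod_k (b k + 2).
have M0 : 0 < M by apply: prodr_gt0 => k _; rewrite ltr_wpDl.
have perturbed e : 0 < e -> e <= 1 ->
    (outer (prod_sigma d) etaP (box S) <= (\prod_k b k + e * M)%:E)%E.
  move=> e0 e1; apply: le_trans (outer_box_le_perturbed S b e e0 hS) _.
  by rewrite lee_fin prod_perturb_le // ltW.
case Eo: (outer (prod_sigma d) etaP (box S)) => [x| |].
- rewrite lee_fin; apply/ler_addgt0Pr => e e0.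
  set t := Num.min 1 (e / M).
  have t0 : 0 < t by rewrite lt_min ltr01 divr_gt0.
  have t1 : t <= 1 by rewrite ge_min lexx.
  have := perturbed t t0 t1; rewrite Eo lee_fin => /le_trans; apply.
  by rewrite lerD2l -ler_pdivlMr // ge_min lexx orbT.
- by have := perturbed 1 ltr01 (lexx _); rewrite Eo leye_eq.
- by rewrite leNye.
Qed.

End OuterProduct.

Lemma enorm_mxrow (R : realType) n (q : 'I_n -> nat) (y : forall k, 'rV[R]_(q k)) k :
  enorm (y k) <= enorm (\mxrow_k y k).
Proof.
rewrite /enorm ler_sqrt; last by apply: sumr_ge0 => i _; exact: sqr_ge0.
have -> : \sum_(i < \sum_(k < n) q k) ((\mxrow_k y k) ord0 i) ^+ 2 =
    \sum_k \sum_(j < q k) (y k ord0 j) ^+ 2.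
  rewrite sig_big_dep /= (reindex _ tagnat.sig_bij_on) /=.
  by apply: eq_bigr => s _; rewrite mxE.
rewrite (bigD1 k) //= lerDl; apply: sumr_ge0 => i _; apply: sumr_ge0 => j _.
exact: sqr_ge0.
Qed.

Lemma prod_dist_ge (R : realType) n (Om : 'I_n -> Type)
    (d : forall k, Om k -> Om k -> R) t s k :
  d k (t k) (s k) <= prod_dist d t s.
Proof.
rewrite /prod_dist; apply: le_trans (ler_norm _) _.
rewrite -sqrtr_sqr ler_sqrt; last by apply: sumr_ge0 => i _; exact: sqr_ge0.
rewrite (bigD1 k) //= lerDl; apply: sumr_ge0 => i _; exact: sqr_ge0.
Qed.

Definition transversal_at (R : realType) (l q : nat) (T : Type) (d : T -> T -> R)
    (M : set (set T)) (eta : set T -> \bar R) (Z : set 'rV[R]_q)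
    (F : T -> 'I_l -> 'rV[R]_q -> 'rV[R]_q) (t0 : T) (delta a : R) : Prop :=
  exists C : R, 0 < C /\
    forall i j : nat -> 'I_l, i <> j -> forall r : R, 0 < r ->
      (outer M eta [set t | (d t0 t <= delta)%R /\
           (enorm (coding Z (F t) i - coding Z (F t) j) < r)%R]
       <= (C * expR ((wedge_len i j)%:R * a) * Zsv Z (F t0) (wedge i j) r)%:E)%E.

(* The GTC with an explicit threshold delta0 and error function psi:
   GTC holds iff GTC_with holds for some delta0 > 0 and some psi. *)
Definition GTC_with (R : realType) (l q : nat) (T : Type) (d : T -> T -> R)
    (M : set (set T)) (eta : set T -> \bar R) (Z : set 'rV[R]_q)
    (F : T -> 'I_l -> 'rV[R]_q -> 'rV[R]_q) (delta0 : R) (psi : R -> R) : Prop :=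
  [/\ forall x, 0 < x < delta0 -> 0 <= psi x, psi x @[x --> 0^'+] --> 0 &
      forall t0 delta, 0 < delta < delta0 -> transversal_at d M eta Z F t0 delta (psi delta)].

Section ProductGTC.
Local Unset Implicit Arguments.
Variables (R : realType) (l n : nat) (q : 'I_n -> nat) (Om : 'I_n -> Type).
Variables (d : forall k, Om k -> Om k -> R) (eta : forall k, set (Om k) -> \bar R).
Variables (Z : forall k, set 'rV[R]_(q k)).
Variables (F : forall k, Om k -> 'I_l -> 'rV[R]_(q k) -> 'rV[R]_(q k)).
Variable (etaP : set (forall k, Om k) -> \bar R).
Hypothesis l_gt0 : (0 < l)%N.
Hypothesis hP : is_product_measure d eta etaP.
Hypothesis heta : forall k, measure_on (borel (d k)) (eta k).
Hypothesis hC1 : forall k (t : Om k), C1_IFS (Z k) (F k t).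
Local Notation Fp := (fun (t : forall k, Om k) (i : 'I_l) => prod_map (fun k => F k (t k) i)).

Lemma event_sub_box (t0 : forall k, Om k) delta i j r :
  [set t | prod_dist d t0 t <= delta /\
     enorm (coding (prodZ Z) (Fp t) i - coding (prodZ Z) (Fp t) j) < r]
  `<=` box (fun k => [set s | d k (t0 k) s <= delta /\
     enorm (coding (Z k) (F k s) i - coding (Z k) (F k s) j) < r]).
Proof.
move=> t [near_t0 close] k; split; first exact: le_trans (prod_dist_ge d t0 t k) near_t0.
apply: le_lt_trans close; rewrite !(coding_prod _ _ _ _ _ _ (fun k => hC1 k (t k))) -mxrowB.
exact: (enorm_mxrow (fun k => coding (Z k) (F k (t k)) i - coding (Z k) (F k (t k)) j)).
Qed.

Lemma transversal_at_prod (t0 : forall k, Om k) delta (a : 'I_n -> R) :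
  (forall k, transversal_at (d k) (borel (d k)) (eta k) (Z k) (F k) (t0 k) delta (a k)) ->
  transversal_at (prod_dist d) (prod_sigma d) etaP (prodZ Z) Fp t0 delta (\sum_k a k).
Proof.
move=> /boolp.choice[C hC]; exists (\prod_k C k).
split; first by apply: prodr_gt0 => k _; case: (hC k).
move=> i j ij r r0.
pose b k := C k * expR ((wedge_len i j)%:R * a k) * Zsv (Z k) (F k (t0 k)) (wedge i j) r.
have C0 k : 0 <= C k by case: (hC k) => /ltW.
have b0 k : 0 <= b k by rewrite /b !mulr_ge0 ?Zsv_ge0 ?expR_ge0.
apply: le_trans (outer_le _ _ (event_sub_box t0 delta i j r)) _.
apply: le_trans (outer_box_le _ _ _ _ _ _ hP heta _ b b0 (fun k => (hC k).2 i j ij r r0)) _.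
rewrite lee_fin /b !big_split /= mulr_sumr expR_sum ler_wpM2l //.
  by rewrite mulr_ge0 // prodr_ge0 // => k _; rewrite expR_ge0.
exact: (Zsv_prod _ _ _ _ _ _ (fun k => hC1 k (t0 k))).
Qed.

Lemma GTC_with_prod (delta0 : 'I_n -> R) (psi : 'I_n -> R -> R) :
  (forall k, 0 < delta0 k) ->
  (forall k, GTC_with (d k) (borel (d k)) (eta k) (Z k) (F k) (delta0 k) (psi k)) ->
  GTC_with (prod_dist d) (prod_sigma d) etaP (prodZ Z) Fp
    (\big[Num.min/1]_k delta0 k) (fun x => \sum_k psi k x).
Proof.
move=> delta0_gt0 hG.
have below x k : x < \big[Num.min/1]_k delta0 k -> x < delta0 k.
  by move=> /lt_le_trans; apply; exact: bigmin_le.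
split.
- move=> x /andP[x0 /below xD]; apply: sumr_ge0 => k _.
  by have [psi0 _ _] := hG k; apply: psi0; rewrite x0 xD.
- have psi_cvg k : psi k x @[x --> (0:R)^'+] --> 0 by case: (hG k).
  have sum_cvg := @cvg_big R 'I_n +%R 0 xpredT add_continuous R _ (index_enum 'I_n)
    (fun k x => psi k x) (fun=> 0) _ (fun k _ => psi_cvg k).
  by rewrite big1 // in sum_cvg; apply: sum_cvg.
- move=> t0 delta /andP[delta_gt0 /below deltaD]; apply: transversal_at_prod => k.
  by have [_ _ hT] := hG k; apply: hT; rewrite delta_gt0 deltaD.
Qed.

End ProductGTC.

Theorem proposition6p1 (R : realType) (l n : nat) (q : 'I_n -> nat)
  (Om : 'I_n -> Type) (d : forall k, Om k -> Om k -> R)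
  (eta : forall k, set (Om k) -> \bar R)
  (Z : forall k, set 'rV[R]_(q k))
  (F : forall k, Om k -> 'I_l -> 'rV[R]_(q k) -> 'rV[R]_(q k))
  (etaP : set (forall k, Om k) -> \bar R) :
  (2 <= l)%N ->
  (forall k, is_metric (d k)) ->
  (forall k, loc_finite_borel (d k) (eta k)) ->
  (forall k (t : Om k), C1_IFS (Z k) (F k t)) ->
  (forall k, GTC (d k) (borel (d k)) (eta k) (Z k) (F k)) ->
  is_product_measure d eta etaP ->
  GTC (prod_dist d) (prod_sigma d) etaP (prodZ Z)
      (fun (t : forall k, Om k) (i : 'I_l) => prod_map (fun k => F k (t k) i)).
Proof.
move=> l2 _ hloc hC1 hGTC hP.
have heta k : measure_on (borel (d k)) (eta k) by case: (hloc k).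
have hG k : exists dp : R * (R -> R),
    0 < dp.1 /\ GTC_with (d k) (borel (d k)) (eta k) (Z k) (F k) dp.1 dp.2.
  by have [delta0 [delta0_gt0 [psi hpsi]]] := hGTC k; exists (delta0, psi).
have [dp hdp] := boolp.choice hG.
exists (\big[Num.min/1]_k (dp k).1); split.
  by apply: lt_bigmin => // k _; case: (hdp k).
exists (fun x => \sum_k (dp k).2 x).
apply: (GTC_with_prod _ _ _ _ _ _ _ _ _ _ (leq_trans _ l2) hP heta hC1) => // k;
  by case: (hdp k).
Qed.
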